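(* Let $X$ and $Y$ be topological spaces with $Y$ a $T_0$-space, and let $p\colon X\to Y$ be a surjective continuous map. Let $R$ be an equivalence relation on $X$ such that: (i) if $x_1\sim_R x_2$ then $p(x_1)=p(x_2)$; (ii) for every open $U\subset X$, its $R$-saturation $R(U):=\{x\in X: x\sim_R u \text{ for some } u\in U\}$ is open in $X$; (iii) if $x\in X$ and $A\subset X$ satisfy $p(x)\in\overline{p(A)}$, then $x\in\overline{R(A)}$. Then $p$ induces a homeomorphism of $(X/R)^\sim$ onto $Y$. Moreover, $p\colon X\to Y$ is open, and $p(x_1)=p(x_2)$ if and only if $\overline{R(x_1)}=\overline{R(x_2)}$, where $R(x)$ denotes the $R$-equivalence class of $x$.
   Context: For a topological space $Z$, its $T_0$-ization (Kolmogorov quotient) $Z^\sim$ is the quotient space of $Z$ obtained by identifying two points whenever they have the same closure. $X/R$ carries the quotient topology. *)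

From HB Require Import structures.
From mathcomp Require Import all_boot all_order all_algebra generic_quotient.
From mathcomp Require Import all_classical all_reals all_analysis.
Set Implicit Arguments. Unset Strict Implicit. Unset Printing Implicit Defensive.
Local Open Scope classical_set_scope.
Local Open Scope quotient_scope.

Definition saturation (T : Type) (R : T -> T -> bool) (A : set T) : set T :=
  [set x | exists2 u, A u & R x u].

Definition eqclass (T : Type) (R : T -> T -> bool) (x : T) : set T :=
  [set y | R y x].

Definition quot_space (X : topologicalType) (R : equiv_rel X) : topologicalType :=
  quotient_topology {eq_quot R}.

Definition kolmo_relb (Z : topologicalType) (x y : Z) : bool :=
  `[< closure [set x] = closure [set y] >].

Lemma kolmo_refl (Z : topologicalType) : reflexive (@kolmo_relb Z).
Proof. by move=> x; apply/asboolP. Qed.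
Lemma kolmo_sym (Z : topologicalType) : symmetric (@kolmo_relb Z).
Proof. by move=> x y; apply/asboolP/asboolP. Qed.
Lemma kolmo_trans (Z : topologicalType) : transitive (@kolmo_relb Z).
Proof. by move=> y x z /asboolP H1 /asboolP H2; apply/asboolP; rewrite H1. Qed.

Definition kolmo_rel (Z : topologicalType) : equiv_rel Z :=
  EquivRel (@kolmo_relb Z) (@kolmo_refl Z) (@kolmo_sym Z) (@kolmo_trans Z).

Definition T0ization (Z : topologicalType) : topologicalType :=
  quotient_topology {eq_quot (kolmo_rel Z)}.

Definition quot_pi (X : topologicalType) (R : equiv_rel X) : X -> quot_space R :=
  fun x => \pi_({eq_quot R}) x.
Definition T0_pi (Z : topologicalType) : Z -> T0ization Z :=
  fun z => \pi_({eq_quot (kolmo_rel Z)}) z.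

Definition homeomorphism (S T : topologicalType) (h : S -> T) : Prop :=
  continuous h /\ exists g : T -> S,
    [/\ cancel h g, cancel g h & continuous g].

Definition open_map (S T : topologicalType) (f : S -> T) : Prop :=
  forall U : set S, open U -> open (f @` U).

From HB Require Import structures.
From mathcomp Require Import all_boot all_order all_algebra generic_quotient.
From mathcomp Require Import all_classical all_reals all_analysis.
Set Implicit Arguments. Unset Strict Implicit. Unset Printing Implicit Defensive.
Local Open Scope classical_set_scope.
Local Open Scope quotient_scope.

(* Write [q : X -> (X/R)^~] for the two projections.  By (iii) and continuity
   of [p], [x'] lies in the closure of the class of [x] iff [p x'] lies in the
   closure of [p x]; the same holds for the points [q x], [q x'] of the
   quotient.  As [Y] is T0, [p x = p x'] exactly when [q x = q x'], so [p]
   factors through a continuous bijection [h : (X/R)^~ -> Y].  Finally (iii)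
   and surjectivity make [p] open: if [p u] with [u] in the open set [U] were
   adherent to the complement of [p(U)], then [u] would be adherent to the
   saturated set [p^-1(~ p(U))], which misses [U].  Since [p = h \o q], the
   inverse of [h] is continuous. *)

Lemma continuous_closure_image (S T : topologicalType) (f : S -> T)
    (A : set S) (x : S) :
  continuous f -> closure A x -> closure (f @` A) (f x).
Proof.
move=> cf cAx B /cf /cAx [y [Ay By]].
by exists (f y); split => //; exists y.
Qed.

Lemma closure_sub_closure (T : topologicalType) (A B : set T) :
  A `<=` closure B -> closure A `<=` closure B.
Proof.
by move=> AB; rewrite closureE; apply: smallest_sub => //; exact: closed_closure.
Qed.

Lemma closure_eqP (T : topologicalType) (A B : set T) :
  closure A = closure B <-> A `<=` closure B /\ B `<=` closure A.
Proof.
split => [AB|[/closure_sub_closure AB /closure_sub_closure BA]].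
- by split; [rewrite -AB|rewrite AB]; apply: subset_closure.
- by apply/seteqP; split.
Qed.

Lemma closure1_eqP (T : topologicalType) (a b : T) :
  closure [set a] = closure [set b] <-> closure [set b] a /\ closure [set a] b.
Proof. by rewrite closure_eqP !sub1set !inE. Qed.

Lemma kolmogorov_closure1_antisym (T : topologicalType) (a b : T) :
  kolmogorov_space T -> closure [set b] a -> closure [set a] b -> a = b.
Proof.
move=> T0 ba ab; apply: contrapT => /eqP /T0 [A [[/set_mem Aa /set_mem nAb]|
  [/set_mem Ab /set_mem nAa]]].
- by have [_ [/= -> ]] := ba _ Aa.
- by have [_ [/= -> ]] := ab _ Ab.
Qed.

Lemma saturation1 (T : Type) (R : T -> T -> bool) (x : T) :
  saturation R [set x] = eqclass R x.
Proof. by apply/seteqP; split => y /= => [[_ -> //]|Ryx]; exists x. Qed.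

Section quotient_lift.
Variables (X : topologicalType) (R : equiv_rel X).

Lemma quot_pi_eqP (x y : X) : quot_pi R x = quot_pi R y <-> R x y.
Proof. by rewrite /quot_pi; split => [/eqmodP|/eqmodP]. Qed.

Lemma quot_pi_continuous : continuous (quot_pi R).
Proof. exact: pi_continuous. Qed.

Lemma quot_piP (z : quot_space R) : exists x, z = quot_pi R x.
Proof. by exists (repr z); rewrite /quot_pi reprK. Qed.

Lemma image_quot_pi_eqclass (x : X) :
  quot_pi R @` eqclass R x = [set quot_pi R x].
Proof.
apply/seteqP; split => z /=; first by case=> y Ryx <-; apply/quot_pi_eqP.
by move=> ->; exists x => //; exact: generic_quotient.equiv_refl.
Qed.

Definition quot_lift (Z : Type) (f : X -> Z) : quot_space R -> Z :=
  fun z => f (repr z).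

Variables (Z : topologicalType) (f : X -> Z).
Hypothesis f_compat : forall x y, R x y -> f x = f y.

Lemma quot_liftE (x : X) : quot_lift f (quot_pi R x) = f x.
Proof. by apply: f_compat; apply/quot_pi_eqP; rewrite /quot_pi reprK. Qed.

Lemma quot_lift_continuous : continuous f -> continuous (quot_lift f).
Proof.
move=> cf; apply: (@repr_comp_continuous _ {eq_quot R} _ f cf).
by move=> a b /eqP /quot_pi_eqP /f_compat ->.
Qed.

End quotient_lift.
Arguments quot_lift {X} R {Z} f.

Lemma T0_pi_eqP (Z : topologicalType) (x y : Z) :
  T0_pi x = T0_pi y <-> closure [set x] = closure [set y].
Proof. by rewrite [T0_pi x = _]quot_pi_eqP; split => /asboolP. Qed.

Lemma open_factor_homeomorphism (X S T : topologicalType)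
    (q : X -> S) (h : S -> T) :
  continuous q -> continuous h -> injective h ->
  (forall t, exists x, h (q x) = t) -> open_map (h \o q) -> homeomorphism h.
Proof.
move=> cq ch hinj hq_surj hq_open; split => //.
have [x_ x_E] := choice hq_surj.
exists (q \o x_); split => [s|t|]; first by apply: hinj; rewrite /= x_E.
  by rewrite /= x_E.
apply/continuousP => W oW.
suff -> : (q \o x_) @^-1` W = (h \o q) @` (q @^-1` W).
  by apply: hq_open; move/continuousP: cq; apply.
apply/seteqP; split => t /=; first by exists (x_ t); rewrite // x_E.
by case=> x Wqx <-; have -> : q (x_ (h (q x))) = q x by apply: hinj; rewrite x_E.
Qed.

Section lemma1p4_setting.
Variables (X Y : topologicalType) (p : X -> Y) (R : equiv_rel X).
Hypotheses (p_surj : forall y : Y, exists x : X, p x = y) (p_cont : continuous p).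
Hypothesis p_compat : forall x1 x2 : X, R x1 x2 -> p x1 = p x2.
Hypothesis closure_p_saturation : forall (x : X) (A : set X),
  closure (p @` A) (p x) -> closure (saturation R A) x.

Lemma closure_eqclassP (x x' : X) :
  closure (eqclass R x) x' <-> closure [set p x] (p x').
Proof.
split => [/(continuous_closure_image p_cont)|].
  by apply: closureS => _ [y Ryx <-]; rewrite /= (p_compat Ryx).
by rewrite -image_set1 -saturation1; apply: closure_p_saturation.
Qed.

Lemma closure_quot_pi1P (x x' : X) :
  closure [set quot_pi R x] (quot_pi R x') <-> closure [set p x] (p x').
Proof.
split => [|/closure_eqclassP].
  move/(continuous_closure_image (quot_lift_continuous p_compat p_cont)).
  by rewrite image_set1 !quot_liftE.
by move/(continuous_closure_image (@quot_pi_continuous _ R));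
  rewrite image_quot_pi_eqclass.
Qed.

Lemma p_open : open_map p.
Proof.
move=> U oU; rewrite -closedC; apply/closure_id/seteqP.
split => [|y]; first exact: subset_closure.
have [u <-] := p_surj y; move=> clpu [u' Uu' pu'u].
pose A := p @^-1` (~` (p @` U)).
have pA : ~` (p @` U) `<=` p @` A.
  by move=> z nUz; have [x pxz] := p_surj z; exists x; rewrite // /A /= pxz.
have satA : saturation R A `<=` A.
  by move=> x [a Aa Rxa]; rewrite /A /= (p_compat Rxa).
have : closure (p @` A) (p u') by rewrite pu'u; apply: closureS clpu.
move=> /closure_p_saturation /(closureS satA) /(_ U) [|a [Aa Ua]].
  exact: open_nbhs_nbhs.
by apply: Aa; exists a.
Qed.

Hypothesis Y_T0 : kolmogorov_space Y.

Lemma p_eq_closure_eqclass (x1 x2 : X) :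
  p x1 = p x2 <-> closure (eqclass R x1) = closure (eqclass R x2).
Proof.
split => [p12|E].
  by apply/closure_eqP; split => y Ry; apply/closure_eqclassP;
    rewrite (p_compat Ry) p12; apply: subset_closure.
by apply: (kolmogorov_closure1_antisym Y_T0); apply/closure_eqclassP;
  [rewrite -E|rewrite E]; apply: subset_closure; exact: generic_quotient.equiv_refl.
Qed.

Lemma quot_lift_p_eqP (z1 z2 : quot_space R) :
  quot_lift R p z1 = quot_lift R p z2 <-> closure [set z1] = closure [set z2].
Proof.
have [[x1 ->] [x2 ->]] := (quot_piP z1, quot_piP z2).
rewrite closure1_eqP !closure_quot_pi1P !quot_liftE //.
split => [->|[]]; last exact: kolmogorov_closure1_antisym.
by split; apply: subset_closure.
Qed.

Definition induced_map : T0ization (quot_space R) -> Y :=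
  quot_lift (kolmo_rel (quot_space R)) (quot_lift R p).

Lemma induced_map_compat (z1 z2 : quot_space R) :
  kolmo_rel _ z1 z2 -> quot_lift R p z1 = quot_lift R p z2.
Proof. by move/asboolP/quot_lift_p_eqP. Qed.

Lemma induced_mapE (x : X) : induced_map (T0_pi (quot_pi R x)) = p x.
Proof. by rewrite /induced_map (quot_liftE induced_map_compat) quot_liftE. Qed.

Lemma induced_map_continuous : continuous induced_map.
Proof. exact/(quot_lift_continuous induced_map_compat)/quot_lift_continuous. Qed.

Lemma induced_map_inj : injective induced_map.
Proof.
move=> a b; have [[za ->] [zb ->]] := (quot_piP a, quot_piP b).
rewrite /induced_map !(quot_liftE induced_map_compat).
by move/quot_lift_p_eqP/T0_pi_eqP.
Qed.

Lemma induced_map_homeomorphism : homeomorphism induced_map.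
Proof.
apply: (@open_factor_homeomorphism _ _ _ (@T0_pi _ \o quot_pi R)).
- by move=> x; apply: continuous_comp; apply: quot_pi_continuous.
- exact: induced_map_continuous.
- exact: induced_map_inj.
- by move=> y; have [x <-] := p_surj y; exists x; apply: induced_mapE.
- rewrite (_ : induced_map \o _ = p); first exact: p_open.
  by apply/funext => x; apply: induced_mapE.
Qed.

End lemma1p4_setting.

Theorem lemma1p4 (X Y : topologicalType) (p : X -> Y) (R : equiv_rel X) :
  kolmogorov_space Y ->
  (forall y : Y, exists x : X, p x = y) ->
  continuous p ->
  (forall x1 x2 : X, R x1 x2 -> p x1 = p x2) ->
  (forall U : set X, open U -> open (saturation R U)) ->
  (forall (x : X) (A : set X), closure (p @` A) (p x) ->
      closure (saturation R A) x) ->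
  (exists h : T0ization (quot_space R) -> Y,
      homeomorphism h /\ forall x : X, h (T0_pi (quot_pi R x)) = p x)
  /\ open_map p
  /\ (forall x1 x2 : X,
        p x1 = p x2 <-> closure (eqclass R x1) = closure (eqclass R x2)).
Proof.
move=> Y_T0 p_surj p_cont p_compat _ p_sat; split; last split.
- exists (@induced_map _ _ p R); split.
    exact: induced_map_homeomorphism.
  exact: induced_mapE.
- exact: p_open p_surj p_compat p_sat.
- exact: p_eq_closure_eqclass.
Qed.
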